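(* Let $A:\mathbb{R}^n\to\mathbb{R}^{n\times n}$ be symmetric-matrix valued, three times continuously differentiable at every $v\neq 0$, with $A(\alpha v)=A(v)$ for all $\alpha\in\mathbb{R}\setminus\{0\}$; let $J(v):=\frac{\partial}{\partial v}(A(v)v)$ and $p(y):=\frac{y^TA(y)y}{y^Ty}$. Fix $\sigma\in\mathbb{R}$ and a vector $v_0=y_0$. Let (a) $v_{k+1}=(J(v_k)-\sigma I)^{-1}v_k/\|(J(v_k)-\sigma I)^{-1}v_k\|_2$ (inverse iteration with shift $\sigma$), and (b) $y_{k+1}=\alpha_k\big((\tfrac{1}{h_k}-p(y_k))I+J(y_k)\big)^{-1}y_k$ with $\alpha_k=1/\big\|\big((\tfrac{1}{h_k}-p(y_k))I+J(y_k)\big)^{-1}y_k\big\|_2$ and step length $h_k=\frac{1}{p(y_k)-\sigma}$ (the Rosenbrock–Euler discretization, followed by normalization, of the ODE $y'=p(y)y-A(y)y$). Assume all quantities are well defined (i.e., $p(y_k)\neq\sigma$ and the involved matrices are nonsingular). Then $v_k=y_k$ for all $k\in\mathbb{N}$.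
   Context: The scheme in (b) is what the paper obtains by applying a linearized backward Euler step (Rosenbrock–Euler) to the ODE $y'(t)=p(y(t))y(t)-A(y(t))y(t)$ and projecting the result onto the unit sphere by normalization. *)

From HB Require Import structures.
From mathcomp Require Import all_boot all_order all_algebra.
From mathcomp Require Import all_classical all_reals all_analysis.
Set Implicit Arguments. Unset Strict Implicit. Unset Printing Implicit Defensive.
Import Order.TTheory GRing.Theory Num.Theory.
Import numFieldNormedType.Exports.
Local Open Scope ring_scope.

Definition evec {R : realType} {n : nat} (j : 'I_n) : 'cV[R]_n := delta_mx j 0.

Definition pd {R : realType} {n : nat} (j : 'I_n) (g : 'cV[R]_n -> R) : 'cV[R]_n -> R :=
  fun v => 'D_(evec j) g v.

Definition C3_away0 {R : realType} {n : nat} (g : 'cV[R]_n -> R) : Prop :=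
  forall v : 'cV[R]_n, v != 0 ->
    {for v, continuous g} /\
    forall i j k : 'I_n,
      derivable g v (evec i) /\ {for v, continuous (pd i g)} /\
      derivable (pd i g) v (evec j) /\ {for v, continuous (pd j (pd i g))} /\
      derivable (pd j (pd i g)) v (evec k) /\
      {for v, continuous (pd k (pd j (pd i g)))}.

Definition Jac {R : realType} {n : nat} (A : 'cV[R]_n -> 'M[R]_n) (v : 'cV[R]_n)
  : 'M[R]_n :=
  \matrix_(i, j) pd j (fun w : 'cV[R]_n => (A w *m w) i 0) v.

Definition rayleigh {R : realType} {n : nat} (A : 'cV[R]_n -> 'M[R]_n) (y : 'cV[R]_n)
  : R :=
  ((y^T *m A y *m y) 0 0) / ((y^T *m y) 0 0).

Definition norm2 {R : realType} {n : nat} (x : 'cV[R]_n) : R :=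
  Num.sqrt (\sum_i (x i 0) ^+ 2).

From HB Require Import structures.
From mathcomp Require Import all_boot all_order all_algebra.
From mathcomp Require Import all_classical all_reals all_analysis.
Import Order.TTheory GRing.Theory Num.Theory.
Import numFieldNormedType.Exports.
Local Open Scope ring_scope.

(* With step length h = 1/(p - sigma), the shift 1/h - p of the
   Rosenbrock-Euler matrix is exactly -sigma, so (b) solves the same linear
   system as inverse iteration (a); both then normalize the solution. *)

Lemma rosenbrock_shift (F : fieldType) (p s : F) : ((p - s)^-1)^-1 - p = - s.
Proof. by rewrite invrK addrC addKr. Qed.

Lemma rosenbrock_matrix (F : fieldType) (n : nat) (J : 'M[F]_n) (p s : F) :
  (((p - s)^-1)^-1 - p)%:M + J = J - s%:M.
Proof. by rewrite rosenbrock_shift raddfN addrC. Qed.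

Theorem theorem6 (R : realType) (n : nat) (A : 'cV[R]_n -> 'M[R]_n)
  (hAsym : forall v, (A v)^T = A v)
  (hAC3 : forall i j : 'I_n, C3_away0 (fun v => A v i j))
  (hAhom : forall (a : R) v, a != 0 -> A (a *: v) = A v)
  (sigma : R) (v0 : 'cV[R]_n)
  (v y : nat -> 'cV[R]_n) (h alpha : nat -> R)
  (* well-definedness *)
  (hv0nz : v0 != 0)
  (hvinv : forall k, Jac A (v k) - sigma%:M \in unitmx)
  (hpy : forall k, rayleigh A (y k) != sigma)
  (hyinv : forall k, ((h k)^-1 - rayleigh A (y k))%:M + Jac A (y k) \in unitmx)
  (* inverse iteration (a) *)
  (hvinit : v 0%N = v0)
  (hvrec : forall k, v k.+1 =
     (norm2 (invmx (Jac A (v k) - sigma%:M) *m v k))^-1 *: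
       (invmx (Jac A (v k) - sigma%:M) *m v k))
  (* normalized Rosenbrock-Euler scheme (b) *)
  (hyinit : y 0%N = v0)
  (hh : forall k, h k = (rayleigh A (y k) - sigma)^-1)
  (halpha : forall k, alpha k =
     (norm2 (invmx (((h k)^-1 - rayleigh A (y k))%:M + Jac A (y k)) *m y k))^-1)
  (hyrec : forall k, y k.+1 =
     alpha k *: (invmx (((h k)^-1 - rayleigh A (y k))%:M + Jac A (y k)) *m y k)) :
  forall k : nat, v k = y k.
Proof.
elim=> [|k IH]; first by rewrite hvinit hyinit.
by rewrite hvrec hyrec halpha hh rosenbrock_matrix IH.
Qed.
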